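(* Let $m\geq 13$ and $k\geq 1$ be integers and let $c(x)=1+\sum_{j\in\{2,3,6\}}(x^j+x^{m-j})\in\mathbb{F}_2[x]$. Then $\gcd(c(x^k),x^m-1)=1$ if and only if $\gcd(m,3k)=\gcd(m,7k)=\gcd(m,k)$.
   Context: All polynomials are over $\mathbb{F}_2$. *)

From HB Require Import structures.
From mathcomp Require Import all_boot all_order all_algebra.
Set Implicit Arguments. Unset Strict Implicit. Unset Printing Implicit Defensive.
Import GRing.Theory.
Local Open Scope ring_scope.

Definition cpoly (m : nat) : {poly 'F_2} :=
  1 + \sum_(j <- [:: 2%N; 3%N; 6%N]) ('X^j + 'X^(m - j)).

From HB Require Import structures.
From mathcomp Require Import all_boot all_order all_algebra.
From mathcomp Require Import ring zify.
Set Implicit Arguments. Unset Strict Implicit. Unset Printing Implicit Defensive.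
Import GRing.Theory.
Local Open Scope ring_scope.

(* Proof of Proposition 5.  Write y = x^k and Phi_q(y) = 1 + y + ... + y^(q-1).
   1. Multiplying c(y) by y^6, which is a unit modulo x^m - 1, and reducing
      y^m to 1 turns c(y) into y^12+y^9+y^8+y^6+y^4+y^3+1, which over F_2
      factors as Phi_3(y)^3 * Phi_7(y).  Hence c(y) is coprime to x^m - 1
      iff both Phi_3(y) and Phi_7(y) are.
   2. For any integral domain and q with q = 1 in the coefficient ring,
      Phi_q(x^k) is coprime to x^m - 1 iff gcd(m, qk) = gcd(m, k).  This
      rests on two facts: common divisors of x^a - 1 and x^b - 1 divide
      x^gcd(a,b) - 1 (Bezout in the exponents), and
      (x^k - 1) Phi_q(x^k) = x^qk - 1 with Phi_q(x^k) = q mod (x^k - 1).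
   Since 3 = 7 = 1 in F_2, the theorem is the conjunction of 2. for q = 3, 7.
   The file first proves 2. over an arbitrary integral domain, then the
   characteristic-2 facts and the reduction 1., and finally the theorem. *)

Definition geom (R : comNzRingType) (x : R) (n : nat) : R := \sum_(i < n) x ^+ i.

Lemma geom_mod_subr1 (R : comNzRingType) (x : R) (n : nat) :
  exists S : R, geom x n = (x - 1) * S + n%:R.
Proof.
exists (\sum_(i < n) geom x i).
rewrite /geom mulr_sumr -[n in n%:R]card_ord -sumr_const -big_split /=.
by apply: eq_bigr => i _; rewrite -subrX1 subrK.
Qed.

Section CyclicDivisibility.
Variable R : idomainType.
Implicit Types D : {poly R}.

Lemma dvdp_Xn_sub1 (a b : nat) :
  (a %| b)%N -> ('X^a - 1 : {poly R}) %| 'X^b - 1.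
Proof.
by move=> /dvdnP[c ->]; rewrite mulnC exprM (subrX1 'X^a) dvdp_mulIl.
Qed.

(* A common divisor of x^a - 1 and x^b - 1 divides x^gcd(a,b) - 1: write
   gcd(a,b) = a c - b u and x^g - 1 = (x^ac - 1) - x^g (x^bu - 1). *)
Lemma dvdp_Xn_sub1_gcd D (a b : nat) : (0 < a)%N ->
  D %| 'X^a - 1 -> D %| 'X^b - 1 -> D %| 'X^(gcdn a b) - 1.
Proof.
move=> a_gt0 Da Db; have [u _ /dvdnP[c bezout]] := Bezoutl b a_gt0.
have -> : ('X^(gcdn a b) - 1 : {poly R}) =
   ('X^(a * c) - 1) - 'X^(gcdn a b) * ('X^(b * u) - 1).
  by rewrite (mulnC a c) -bezout exprD (mulnC b u); ring.
apply: dvdp_sub; first exact: dvdp_trans Da (dvdp_Xn_sub1 (dvdn_mulr c _)).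
exact/dvdp_mull/(dvdp_trans Db (dvdp_Xn_sub1 (dvdn_mulr u _))).
Qed.

Lemma dvdp_Xn_sub1_leq (a b : nat) : (0 < b)%N ->
  ('X^a - 1 : {poly R}) %| 'X^b - 1 -> (a <= b)%N.
Proof.
move=> b_gt0; have [-> // | a_gt0] := posnP a.
rewrite -polyC1 => dvd; have nz : ('X^b - 1%:P : {poly R}) != 0.
  by rewrite -size_poly_eq0 size_XnsubC.
by have := dvdp_leq nz dvd; rewrite !size_XnsubC.
Qed.

Lemma coprimep_geom_Xn_sub1 (m k q : nat) :
  (0 < m)%N -> (0 < k)%N -> (0 < q)%N -> q%:R = 1 :> R ->
  coprimep (geom ('X^k) q) ('X^m - 1 : {poly R}) = (gcdn m (q * k) == gcdn m k).
Proof.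
move=> m_gt0 k_gt0 q_gt0 q1.
have [S F_mod] := geom_mod_subr1 ('X^k : {poly R}) q.
rewrite -polyC_natr q1 polyC1 in F_mod.
set F := geom ('X^k) q in F_mod *.
have F_factor : 'X^(q * k) - 1 = ('X^k - 1) * F by rewrite mulnC exprM subrX1.
apply/idP/eqP => [cop | gcd_eq].
- (* x^gcd(m,qk) - 1 is coprime to F, hence divides x^k - 1. *)
  have cop_h : coprimep ('X^(gcdn m (q * k)) - 1) F.
    by rewrite coprimep_sym; apply: coprimep_dvdl cop; exact/dvdp_Xn_sub1/dvdn_gcdl.
  have dvd_k : ('X^(gcdn m (q * k)) - 1 : {poly R}) %| 'X^k - 1.
    by rewrite -(Gauss_dvdpl _ cop_h) -F_factor; exact/dvdp_Xn_sub1/dvdn_gcdr.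
  have := dvdp_Xn_sub1_gcd k_gt0 dvd_k (dvdp_Xn_sub1 (dvdn_gcdl m (q * k))).
  move=> /dvdp_Xn_sub1_leq; rewrite gcdn_gt0 k_gt0 (gcdnC k) => /(_ isT) le.
  by apply/eqP; rewrite eqn_leq le dvdn_leq ?gcdn_gt0 ?m_gt0 ?dvdn_gcd
    ?dvdn_gcdl ?dvdn_mull ?dvdn_gcdr.
- (* A common divisor D divides x^gcd(m,qk) - 1 = x^gcd(m,k) - 1, hence
     x^k - 1, and so also F - (x^k - 1) S = 1. *)
  apply/coprimepP => D DF Dm.
  have Dqk : D %| 'X^(q * k) - 1 by rewrite F_factor dvdp_mull.
  have qk_gt0 : (0 < q * k)%N by rewrite muln_gt0 q_gt0.
  have := dvdp_Xn_sub1_gcd qk_gt0 Dqk Dm.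
  rewrite gcdnC gcd_eq => /dvdp_trans/(_ (dvdp_Xn_sub1 (dvdn_gcdr m k))) Dk.
  have D1 : D %| 1.
    have -> : (1 : {poly R}) = F - ('X^k - 1) * S by rewrite F_mod; ring.
    by rewrite dvdp_sub ?dvdp_mulr.
  by rewrite /eqp D1 dvd1p.
Qed.

End CyclicDivisibility.

Section Characteristic2.
Variable R : comNzRingType.
Hypothesis pchar2 : 2 \in [pchar R].

Lemma eq_mod2 (a b c : R) : a = b + 2%:R * c -> a = b.
Proof. by rewrite (pcharf0 pchar2) mul0r addr0. Qed.

Lemma natr_odd_pchar2 (q : nat) : odd q -> q%:R = 1 :> R.
Proof.
move=> q_odd; rewrite -(odd_double_half q) q_odd natrD -muln2 natrM.
by rewrite (pcharf0 pchar2) mulr0 addr0.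
Qed.

End Characteristic2.

Lemma pchar2_F2 : 2 \in [pchar 'F_2].
Proof. exact: pchar_Fp. Qed.

Lemma factor_F2 (y : {poly 'F_2}) :
  y^+12 + y^+9 + y^+8 + y^+6 + y^+4 + y^+3 + 1 = geom y 3 ^+ 3 * geom y 7.
Proof.
have pchar2 : 2 \in [pchar {poly 'F_2}] by rewrite pchar_poly pchar2_F2.
rewrite /geom !big_ord_recr big_ord0 /=.
(* Over the integers the two sides differ by twice the cofactor below. *)
apply: (@eq_mod2 _ pchar2 _ _ (- (2 * y + 5%:R * y^+2 + 8%:R * y^+3 + 11%:R * y^+4
  + 13%:R * y^+5 + 13%:R * y^+6 + 13%:R * y^+7 + 11%:R * y^+8 + 8%:R * y^+9
  + 5%:R * y^+10 + 2%:R * y^+11))).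
ring.
Qed.

Lemma cpoly_shift (m : nat) (y : {poly 'F_2}) : (6 <= m)%N ->
  y ^+ 6 * (cpoly m \Po y)
  = geom y 3 ^+ 3 * geom y 7 + (y ^+ 4 + y ^+ 3 + 1) * (y ^+ m - 1).
Proof.
move=> m_ge6; have [n ->] : exists n, m = (n + 6)%N by exists (m - 6)%N; lia.
rewrite -factor_F2 /cpoly !big_cons big_nil !comp_polyD !comp_Xn_poly comp_poly0.
rewrite -polyC1 comp_polyC polyC1.
have -> : (n + 6 - 2 = n + 4)%N by lia.
have -> : (n + 6 - 3 = n + 3)%N by lia.
have -> : (n + 6 - 6 = n)%N by lia.
by rewrite !exprD; ring.
Qed.

Lemma coprimep_cpoly (m k : nat) : (6 <= m)%N ->
  coprimep (cpoly m \Po 'X^k) ('X^m - 1) =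
  coprimep (geom ('X^k) 3 ^+ 3 * geom ('X^k) 7 : {poly 'F_2}) ('X^m - 1).
Proof.
move=> m_ge6; have cop_y6 : coprimep ('X^k ^+ 6) ('X^m - 1 : {poly 'F_2}).
  apply/coprimep_expl/coprimep_expl; rewrite coprimep_sym coprimepX rootE.
  by rewrite !hornerE expr0n gtn_eqF ?sub0r ?oppr_eq0 ?oner_eq0 //; lia.
rewrite -[LHS]andTb -cop_y6 -coprimepMl cpoly_shift //.
have [W ->] : exists W, 'X^k ^+ m - 1 = W * ('X^m - 1 : {poly 'F_2}).
  by apply/dvdpP; rewrite -exprM mulnC dvdp_Xn_sub1 ?dvdn_mulr.
by rewrite mulrA coprimep_sym [_ + _ * _]addrC coprimep_addl_mul coprimep_sym.
Qed.

Theorem proposition5 (m k : nat) (hm : (13 <= m)%N) (hk : (1 <= k)%N) :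
  coprimep (cpoly m \Po 'X^k) ('X^m - 1)
  <-> (gcdn m (3 * k) = gcdn m k /\ gcdn m (7 * k) = gcdn m k).
Proof.
have m_gt0 : (0 < m)%N by lia.
rewrite coprimep_cpoly; last by lia.
rewrite coprimepMl coprimep_pexpl //.
rewrite !coprimep_geom_Xn_sub1 ?(natr_odd_pchar2 pchar2_F2) //.
by split => [/andP[/eqP -> /eqP ->] | [-> ->]] //; rewrite !eqxx.
Qed.
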